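(* Let $n\in\mathbb{N}$ and $a\in\mathbb{R}$ with $|a|>5$. Let $\tilde{E}_n(a,1)$ be the $(n+1)\times n$ matrix whose $(i,j)$ entry is $a$ if $i=j$, $1$ if $j=i+1$, $a$ if $i=j+1$, $1$ if $i=j+2$, and $0$ otherwise, and let $\tilde{B}_n(a,1)$ be the $(n+3)\times n$ matrix whose first row is $(1,0,\dots,0)$, whose rows $2,\dots,n+2$ are the rows of $\tilde{E}_n(a,1)$ in order, and whose last row is $(0,\dots,0,1)$. Then the columns of $\tilde{B}_n(a,1)$ are linearly independent, and every non-zero linear combination of these columns has at least $4$ non-zero entries. *)

From mathcomp Require Import all_boot all_order all_algebra.
From mathcomp Require Import reals.
Set Implicit Arguments. Unset Strict Implicit. Unset Printing Implicit Defensive.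
Import Order.TTheory GRing.Theory Num.Theory.
Local Open Scope ring_scope.

(* Indices are 0-based: row i : 'I_(n+1), column j : 'I_n correspond to the
   paper's i+1, j+1; the relations i=j, j=i+1, i=j+1, i=j+2 are shift-invariant. *)
Definition Etilde (R : nzRingType) (n : nat) (a : R) : 'M[R]_(n.+1, n) :=
  \matrix_(i < n.+1, j < n)
    if (i == j :> nat) then a
    else if (j == i.+1 :> nat) then 1
    else if (i == j.+1 :> nat) then a
    else if (i == j.+2 :> nat) then 1
    else 0.

Definition Btilde (R : nzRingType) (n : nat) (a : R) : 'M[R]_(n.+3, n) :=
  \matrix_(i < n.+3, j < n)
    if (i == 0%N :> nat) then (j == 0%N :> nat)%:R
    else if (i == n.+2 :> nat) then (j == n.-1 :> nat)%:R
    else Etilde n a (inord i.-1) j.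

From mathcomp Require Import all_boot all_order all_algebra.
From mathcomp Require Import reals.
From mathcomp Require Import zify ring lra.
Import Order.TTheory GRing.Theory Num.Theory.
Local Open Scope ring_scope.
Set Implicit Arguments. Unset Strict Implicit. Unset Printing Implicit Defensive.

(* Column j of [Btilde n a] holds the coefficients of X^j (X^3 + aX^2 + aX + 1),
   so [Btilde n a *m v] is the coefficient vector of W = (X^3 + aX^2 + aX + 1) V,
   V being the polynomial with coefficients v. The cubic factors as
   (X + 1)(X^2 + (a - 1)X + 1); hence W(-1) = 0, i.e. the alternating sum of the
   coefficients of W vanishes, and no coefficient of W can exceed the sum of the
   moduli of the others. With U = (X + 1) V and M = |U_j| the largest coefficient
   modulus of U, the coefficient U_(j+1) + (a - 1) U_j + U_(j-1) of W has modulus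
   at least (|a - 1| - 2) M > 2M, whereas the lowest and the highest nonzero
   coefficients of W are those of U, of modulus at most M. So W has a fourth
   nonzero coefficient. *)

Section BandPolynomial.
Variable R : comNzRingType.
Implicit Types (a c : R) (U : {poly R}).

Definition quad_poly c : {poly R} := 'X^2 + c%:P * 'X + 1.

Definition band_poly a : {poly R} := 'X^3 + a%:P * 'X^2 + a%:P * 'X + 1.

Lemma band_poly_factor a : band_poly a = ('X + 1) * quad_poly (a - 1).
Proof. by rewrite /band_poly /quad_poly polyCB polyC1; ring. Qed.

Lemma horner_band_poly_neg1 a : (band_poly a).[-1] = 0.
Proof. by rewrite /band_poly !(hornerD, hornerCM, hornerXn, hornerX) hornerC; ring. Qed.

Lemma coef_band_poly a i :
  (band_poly a)`_i = (i == 3)%:R + a * (i == 2)%:R + a * (i == 1)%:R + (i == 0)%:R.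
Proof. by rewrite !coefD !coefCM !coefXn coefX coef1. Qed.

Lemma size_band_poly a : (size (band_poly a) <= 4)%N.
Proof.
apply/leq_sizeP => i hi; rewrite coef_band_poly !gtn_eqF ?mulr0 ?addr0 //; lia.
Qed.

Lemma coef_quad_poly_mul c U i :
  (quad_poly c * U)`_i = ('X^2 * U)`_i + c * ('X * U)`_i + U`_i.
Proof. by rewrite !mulrDl mul1r -mulrA !coefD coefCM. Qed.

End BandPolynomial.

Lemma coef_neq0_lt_size (R : nzSemiRingType) (p : {poly R}) i :
  p`_i != 0 -> (i < size p)%N.
Proof. by rewrite ltnNge; apply: contra => /leq_sizeP/(_ i (leqnn i))->. Qed.

Section SparseRootAtNegOne.
Variable R : numDomainType.
Implicit Types p : {poly R}.

Definition has_dominant_coef p := exists s t k,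
  [/\ s != t, p`_s != 0, p`_t != 0 & `|p`_s| + `|p`_t| < `|p`_k|].

Lemma four_le_card_nz_coef p N :
  (size p <= N)%N -> p.[-1] = 0 -> has_dominant_coef p ->
  (4 <= #|[set i : 'I_N | (p`_i != 0)%R]|)%N.
Proof.
move=> szp root_p [s [t [k [st ps pt dom]]]].
have ltN i (pi : p`_i != 0) : (i < N)%N := leq_trans (coef_neq0_lt_size pi) szp.
have pk : p`_k != 0 by rewrite -normr_gt0; apply: le_lt_trans dom; rewrite addr_ge0.
have ks : k != s by apply: contraTneq dom => ->; rewrite le_gtF // lerDl.
have kt : k != t by apply: contraTneq dom => ->; rewrite le_gtF // lerDr.
pose s' := Ordinal (ltN s ps); pose t' := Ordinal (ltN t pt).
pose k' := Ordinal (ltN k pk).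
set S := [set i | _]; rewrite leqNgt; apply/negP => small.
have defS : k' |: [set s'; t'] = S.
  apply/eqP; rewrite eqEcard; apply/andP; split.
    by apply/subsetP => i; rewrite !inE => /or3P[] /eqP->.
  by rewrite cardsU1 cards2 !inE -!val_eqE /= negb_or ks kt st -ltnS.
have eval_S : p.[-1] = \sum_(i in S) p`_i * (-1) ^+ i.
  rewrite (horner_coef_wide _ szp) (bigID (mem S)) /= [X in _ + X]big1 ?addr0 // => i.
  by rewrite inE negbK => /eqP->; rewrite mul0r.
have sum_kst : p`_k * (-1) ^+ k + (p`_s * (-1) ^+ s + p`_t * (-1) ^+ t) = 0.
  rewrite -[RHS]root_p eval_S -defS !big_setU1 ?big_set1 //.
  - by rewrite inE -val_eqE.
  - by rewrite !inE -!val_eqE /= negb_or ks kt.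
move: dom; apply/negP; rewrite le_gtF // -(normrMsign k) mulrC -normrN (addr0_eq sum_kst).
apply: le_trans (ler_normD _ _) _.
by rewrite ![_ * (-1) ^+ _]mulrC !normrMsign.
Qed.

End SparseRootAtNegOne.

Section DominantCoefficient.
Variable R : realDomainType.
Implicit Types (c M : R) (U : {poly R}).

Lemma exists_max_norm_coef U : exists j, forall i, `|U`_i| <= `|U`_j|.
Proof.
have [/eqP|szU] := posnP (size U).
  by rewrite size_poly_eq0 => /eqP->; exists 0%N => i; rewrite coef0 normr0.
have [j _ jmax] := arg_maxP (fun j : 'I_(size U) => `|U`_j|) (isT : xpredT (Ordinal szU)).
exists j => i; have [lti|/(nth_default 0)->] := ltnP i (size U).
  exact: (jmax (Ordinal lti)).
by rewrite normr0.
Qed.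

Lemma norm_coef_XnM_le U M k i :
  (forall j, `|U`_j| <= M) -> `|('X^k * U)`_i| <= M.
Proof.
by move=> UM; rewrite coefXnM; case: ifP => // _; rewrite normr0 (le_trans _ (UM 0%N)).
Qed.

Lemma quad_poly_mul_dominant c U : 4 < `|c| -> U != 0 -> has_dominant_coef (quad_poly c * U).
Proof.
move=> hc U0; set W := quad_poly c * U.
have [j Umax] := exists_max_norm_coef U; set M := `|U`_j| in Umax.
have [s [Us Ulow]] : exists s, U`_s != 0 /\ forall i, (i < s)%N -> U`_i = 0.
  have nzU : exists i, U`_i != 0 by exists (size U).-1; rewrite -lead_coefE lead_coef_eq0.
  case: (ex_minnP nzU) => s Us smin; exists s; split=> // i.
  by apply: contraTeq => Ui; rewrite -leqNgt smin.
have ltsU := coef_neq0_lt_size Us.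
have M_gt0 : 0 < M by apply: lt_le_trans (Umax s); rewrite normr_gt0.
have XU_s k : (0 < k)%N -> ('X^k * U)`_s = 0.
  by move=> k_gt0; rewrite coefXnM; case: ltnP => // ks; apply: Ulow; lia.
have Ws : W`_s = U`_s by rewrite coef_quad_poly_mul (XU_s 1%N) ?XU_s // mulr0 !add0r.
have Wt : W`_(size U).+1 = lead_coef U.
  rewrite coef_quad_poly_mul coefXM coefXnM /= (nth_default 0 (leqnn _)) (nth_default 0 (leqnSn _)).
  have -> : ((size U).+1 < 2)%N = false by lia.
  by rewrite mulr0 !addr0 lead_coefE subn2.
have Wk : `|c| * M <= `|W`_j.+1| + (M + M).
  have -> : `|c| * M = `|W`_j.+1 - ('X^2 * U)`_j.+1 - U`_j.+1|.
    by rewrite coef_quad_poly_mul coefXM /= -normrM; congr `|_|; ring.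
  apply: le_trans (ler_normB _ _) _; rewrite addrA lerD //.
  by apply: le_trans (ler_normB _ _) _; rewrite lerD // norm_coef_XnM_le.
exists s, (size U).+1, j.+1; split.
- by rewrite ltn_eqF // ltnW.
- by rewrite Ws.
- by rewrite Wt lead_coef_eq0.
- have hcM : 4 * M < `|c| * M by rewrite ltr_pM2r.
  have := Umax (size U).-1; rewrite -lead_coefE -Wt.
  have := Umax s; rewrite -Ws; lra.
Qed.

End DominantCoefficient.

Section BtildeAsPolynomialProduct.
Variable R : comNzRingType.

Lemma Btilde_coef n (a : R) (i : 'I_n.+3) (j : 'I_n) :
  Btilde n a i j = (band_poly a * 'X^j)`_i.
Proof.
case: i j => [i lti] [j ltj]; rewrite coefMXn coef_band_poly !mxE /=.
have [->|i_ne0] := eqVneq i 0%N; last have [->|i_neN] := eqVneq i n.+2.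
3: rewrite inordK; last by lia.
all: case: ltnP => ?; repeat case: eqP => ? /=.
all: by rewrite ?mulr1n ?mulr0n ?mulr1 ?mulr0 ?addr0 ?add0r //; lia.
Qed.

Lemma Btilde_mul_col n (a : R) (v : 'cV[R]_n) (i : 'I_n.+3) :
  (Btilde n a *m v) i ord0 = (band_poly a * rVpoly v^T)`_i.
Proof.
rewrite mxE /rVpoly poly_def mulr_sumr coef_sum; apply: eq_bigr => j _.
by rewrite valK [v^T _ _]mxE Btilde_coef -scalerAr coefZ mulrC.
Qed.

End BtildeAsPolynomialProduct.

Lemma four_le_card_nz_Btilde_mul (R : realDomainType) n (a : R) :
  5 < `|a| -> forall v : 'cV[R]_n, v != 0 ->
  (4 <= #|[set i : 'I_n.+3 | (Btilde n a *m v) i ord0 != 0%R]|)%N.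
Proof.
move=> ha v v_neq0; set V := rVpoly v^T.
have V_neq0 : V != 0.
  by apply: contra v_neq0 => /eqP V0; rewrite -trmx_eq0 -(rVpolyK v^T) -/V V0 linear0.
have -> : [set i : 'I_n.+3 | (Btilde n a *m v) i ord0 != 0]
        = [set i : 'I_n.+3 | (band_poly a * V)`_i != 0].
  by apply/setP => i; rewrite !inE Btilde_mul_col.
apply: four_le_card_nz_coef.
- apply: leq_trans (size_polyMleq _ _) _.
  rewrite -subn1 leq_subLR; exact: leq_trans (leq_add (size_band_poly a) (size_poly _ _)) _.
- by rewrite hornerM horner_band_poly_neg1 mul0r.
- rewrite band_poly_factor mulrAC mulrC; apply: quad_poly_mul_dominant.
    by have := ler_normD (a - 1) 1; rewrite subrK normr1; lra.
  by rewrite mulf_neq0 // -polyC1 monic_neq0 ?monicXaddC.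
Qed.

Lemma row_free_trmx (F : fieldType) m n (A : 'M[F]_(m, n)) :
  (forall v : 'cV_n, A *m v = 0 -> v = 0) -> row_free A^T.
Proof.
move=> A_inj; apply/inj_row_free => w /(congr1 trmx).
by rewrite trmx_mul trmxK trmx0 => /A_inj /(congr1 trmx); rewrite trmxK trmx0.
Qed.

Theorem corollary5p4 (R : realType) (n : nat) (a : R) (ha : 5 < `|a|) :
  row_free (Btilde n a)^T /\
  (forall v : 'cV[R]_n, v != 0%R ->
     (4 <= #|[set i : 'I_n.+3 | (Btilde n a *m v) i ord0 != 0%R]|)%N).
Proof.
have card_nz := @four_le_card_nz_Btilde_mul R n a ha.
split=> //; apply: row_free_trmx => v Bv0; apply/eqP; apply: contraT => /card_nz.
rewrite Bv0; under eq_finset => i do rewrite mxE eqxx.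
by rewrite cards0.
Qed.
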